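(* Let $\mathcal{A}$ be a pOC with state set $Q$ whose underlying chain $\mathcal{X}$ is strongly connected, and let $t$ be its trend. There is a vector $v\in\mathbb{R}^Q$ with the following two properties. - For every initial configuration, the process $m^{(0)},m^{(1)},\dots$ on runs of $\mathcal{M}_\mathcal{A}$ defined by $$m^{(i)}=\begin{cases}c^{(i)}+v_{p^{(i)}}-i\cdot t & \text{if } c^{(j)}\ge1 \text{ for all } 0\le j<i,\\ m^{(i-1)} & \text{otherwise}\end{cases}$$ is a martingale. Here $p^{(i)}$ and $c^{(i)}$ are the control state and counter value of the $i$-th configuration of the run. - $v_{\max}-v_{\min}\le 2|Q|/x_{\min}^{|Q|}$, where $x_{\min}$ is the smallest positive transition probability in $\mathcal{X}$, and $v_{\max}$ and $v_{\min}$ are the maximal and minimal components of $v$.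
   Context: A pOC is $\mathcal{A}=(Q,\delta^{=0},\delta^{>0},P^{=0},P^{>0})$ with the following components. - $\delta^{>0}\subseteq Q\times\{-1,0,1\}\times Q$ are the positive rules and $\delta^{=0}\subseteq Q\times\{0,1\}\times Q$ are the zero rules. Every state has both kinds of outgoing rule. - $P^{>0}$ and $P^{=0}$ are positive probability distributions over the outgoing rules of each state. $\mathcal{M}_\mathcal{A}$ is the Markov chain on configurations $p(i)$ with the following transitions: - $p(0)\to q(c)$ with probability $P^{=0}(p,c,q)$; - for $i\ge1$, $p(i)\to q(i+c)$ with probability $P^{>0}(p,c,q)$. $\mathcal{X}$ is the finite Markov chain on $Q$ with transition matrix $A_{pq}=\sum_cP^{>0}(p,c,q)$. With $\alpha$ its invariant distribution and $s_p=\sum_{(p,c,q)\in\delta^{>0}}P^{>0}(p,c,q)c$, the trend is $t=\alpha s$. *)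

From mathcomp Require Import all_boot all_order all_algebra.
From mathcomp Require Import reals.
Set Implicit Arguments. Unset Strict Implicit. Unset Printing Implicit Defensive.
Import Order.TTheory GRing.Theory Num.Theory.
Local Open Scope ring_scope.

(* Rules are encoded by their probabilities: a rule (p,c,q) exists iff its
   probability is nonzero; counter changes are integers c.
   Pz p c q = P^{=0}(p,c,q), Pp p c q = P^{>0}(p,c,q). *)
Record pOC (Q : finType) (R : realType) := POC {
  Pz : Q -> int -> Q -> R;
  Pp : Q -> int -> Q -> R;
  Pz_ge0 : forall p c q, 0 <= Pz p c q;
  Pp_ge0 : forall p c q, 0 <= Pp p c q;
  Pz_supp : forall p c q, Pz p c q != 0 -> (c == 0%Z) || (c == 1%Z);
  Pp_supp : forall p c q, Pp p c q != 0 -> [|| c == (-1)%Z, c == 0%Z | c == 1%Z];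
  Pz_sum : forall p, \sum_(c <- [:: 0%Z; 1%Z]) \sum_(q : Q) Pz p c q = 1;
  Pp_sum : forall p, \sum_(c <- [:: (-1)%Z; 0%Z; 1%Z]) \sum_(q : Q) Pp p c q = 1
}.

Section POC.
Variables (Q : finType) (R : realType) (A : pOC Q R).

Definition config := (Q * nat)%type.

Definition step (x y : config) : R :=
  let d := (y.2%:Z - x.2%:Z)%R in
  if x.2 == 0%N then Pz A x.1 d y.1
  else Pp A x.1 d y.1.

Definition next_counters (c : nat) : seq nat :=
  if c is 0 then [:: 0%N; 1%N] else [:: c.-1; c; c.+1].

Definition Xmat (p q : Q) : R := \sum_(c <- [:: (-1)%Z; 0%Z; 1%Z]) Pp A p c q.

Definition strongly_connected : Prop :=
  forall p q : Q, connect [rel a b | 0 < Xmat a b] p q.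

Definition invariant_distribution (alpha : Q -> R) : Prop :=
  (forall p, 0 <= alpha p) /\ \sum_(p : Q) alpha p = 1 /\
  (forall q, \sum_(p : Q) alpha p * Xmat p q = alpha q).

Definition drift (p : Q) : R :=
  \sum_(c <- [:: (-1)%Z; 0%Z; 1%Z]) \sum_(q : Q) Pp A p c q * c%:~R.

Definition trend (alpha : Q -> R) : R := \sum_(p : Q) alpha p * drift p.

(* smallest positive transition probability of X (all entries are <= 1) *)
Definition xmin : R :=
  \big[Num.min/1]_(pq : Q * Q | 0 < Xmat pq.1 pq.2) Xmat pq.1 pq.2.

(* The process m^{(i)} evaluated on a run prefix s = x^{(0)} ... x^{(n)}
   (with i <= n); x^{(j)} = nth x0 s j. *)
Fixpoint mproc (x0 : config) (v : Q -> R) (t : R) (s : seq config) (i : nat) : R :=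
  let x := nth (head x0 s) s in
  let val j := ((x j).2)%:R + v (x j).1 - j%:R * t in
  match i with
  | 0 => val 0%N
  | i'.+1 => if all (fun j => 0 < (x j).2)%N (iota 0 i) then val i
             else mproc x0 v t s i'
  end.

(* A process X (X i s = value at time i on a run with prefix s of length
   i+1) is a martingale for runs from x0: for every finite prefix of positive
   probability, the conditional expectation of the next value given the
   prefix equals the current value.  Integrability is automatic since
   there are finitely many prefixes of each length. *)
Definition martingale_from (X : nat -> seq config -> R) (x0 : config) : Prop :=
  forall rest : seq config,
    path (fun a b => 0 < step a b) x0 rest ->
    let s := x0 :: rest in
    let x := last x0 rest in
    \sum_(c <- next_counters x.2) \sum_(q : Q)
        step x (q, c) * X (size rest).+1 (rcons s (q, c))
    = X (size rest) s.

End POC.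

From mathcomp Require Import all_boot all_order all_algebra.
From mathcomp Require Import reals.
From mathcomp Require Import ring lra zify.
Set Implicit Arguments. Unset Strict Implicit. Unset Printing Implicit Defensive.
Import Order.TTheory GRing.Theory Num.Theory.
Local Open Scope ring_scope.

(* The vector v is a solution of the Poisson equation
     v_p = s_p - t + sum_q X_pq v_q   for every state p.
   While the counter is positive, one step of M_A changes c by s_p on average
   and v by (X v)_p - v_p, so c + v_p - i t is preserved in expectation; after
   the counter first hits zero the process is frozen.
   A solution exists: pinning v at a state q of positive invariant mass gives
   a square system which is nonsingular by a maximum principle for the chain
   killed at q, and the equation at q itself then follows because averaging
   the residual against alpha cancels the drift against the trend.
   For the bound, z = v - v_q satisfies z <= 2 + X z off q.  Along a shortest
   X-path from a maximiser of z to q, the gap to the maximum grows at each step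
   at most from g to (2 + g) / xmin, hence max z <= 2 |Q| / xmin^|Q|. *)

Section FiniteChain.
Variables (Q : finType) (R : realType) (A : pOC Q R).

Local Notation X := (Xmat A).

Lemma Pp_sum3 p :
  \sum_q Pp A p (-1)%Z q + \sum_q Pp A p 0%Z q + \sum_q Pp A p 1%Z q = 1.
Proof. by rewrite -(Pp_sum A p) !big_cons big_nil addr0 addrA. Qed.

Lemma sum_Pp_ge0 p c : 0 <= \sum_q Pp A p c q.
Proof. by apply: sumr_ge0 => q _; apply: Pp_ge0. Qed.

Lemma XmatE p q : X p q = Pp A p (-1)%Z q + Pp A p 0%Z q + Pp A p 1%Z q.
Proof. by rewrite /Xmat !big_cons big_nil addr0 addrA. Qed.

Lemma driftE p : drift A p = \sum_q Pp A p 1%Z q - \sum_q Pp A p (-1)%Z q.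
Proof.
rewrite /drift !big_cons big_nil addr0 [X in _ + (X + _)]big1 => [|q _]; last first.
  by rewrite mulr0.
rewrite add0r addrC -sumrN.
by congr (_ + _); apply: eq_bigr => q _; rewrite ?mulr1 ?mulrN1.
Qed.

Lemma Xmat_ge0 p q : 0 <= X p q.
Proof. by apply: sumr_ge0 => c _; apply: Pp_ge0. Qed.

Lemma Xmat_sum1 p : \sum_q X p q = 1.
Proof. by rewrite -(Pp_sum A p) /Xmat exchange_big. Qed.

Lemma xmin_gt0 : 0 < xmin A.
Proof. by apply: (big_ind (fun x => 0 < x)) => // a b a0 b0; rewrite lt_min a0. Qed.

Lemma xmin_le1 : xmin A <= 1.
Proof. exact: bigmin_le_id. Qed.

Lemma xmin_le_Xmat p q : 0 < X p q -> xmin A <= X p q.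
Proof. by move=> pq; apply: (bigmin_le_cond _ (j := (p, q))). Qed.

Lemma normr_drift_le1 p : `|drift A p| <= 1.
Proof.
have := Pp_sum3 p; have := sum_Pp_ge0 p (-1); have := sum_Pp_ge0 p 0.
have := sum_Pp_ge0 p 1; rewrite driftE ler_norml; lra.
Qed.

Lemma normr_trend_le1 alpha : invariant_distribution A alpha -> `|trend A alpha| <= 1.
Proof.
move=> [alpha_ge0 [alpha_sum1 _]]; apply: le_trans (ler_norm_sum _ _ _) _.
rewrite -alpha_sum1; apply: ler_sum => p _.
by rewrite normrM ger0_norm // ler_piMr // normr_drift_le1.
Qed.

Section MaximumPrinciple.
Hypothesis X_connected : strongly_connected A.
Variables (z : Q -> R) (q : Q) (a : R).
Hypotheses (a_ge0 : 0 <= a) (z_q : z q = 0)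
  (z_sub : forall p, p != q -> z p <= a + \sum_r X p r * z r).

Let zmax := z [arg max_(i > q) z i]%O.

Let le_zmax r : z r <= zmax.
Proof. by rewrite /zmax; case: arg_maxP => // i _; apply. Qed.

(* Averaging against [zmax], the one-step mean can only fall below [zmax]
   through the weight [X r r' >= xmin] put on [r']. *)
Let gap_step r r' : r != q -> 0 < X r r' ->
  zmax - z r' <= (a + (zmax - z r)) / xmin A.
Proof.
move=> rq rr'.
have mean_le : \sum_s X r s * z s <= X r r' * z r' + (1 - X r r') * zmax.
  have -> : 1 - X r r' = \sum_(s | s != r') X r s.
    by rewrite -(Xmat_sum1 r) (bigD1 r') //= addrAC subrr add0r.
  rewrite (bigD1 r') //= lerD2l mulr_suml; apply: ler_sum => s _.
  by apply: ler_wpM2l; [apply: Xmat_ge0 | apply: le_zmax].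
have := z_sub rq; have := xmin_le_Xmat rr'; have := le_zmax r'.
rewrite ler_pdivlMr ?xmin_gt0 // => h1 h2 h3; nra.
Qed.

Let gap_path s r i : path [rel a b | 0 < X a b] r s -> uniq (r :: s) ->
  last r s = q -> zmax - z r <= a * i%:R / xmin A ^+ i ->
  zmax - z q <= a * (i + size s)%:R / xmin A ^+ (i + size s).
Proof.
elim: s r i => [|r' s IH] r i /=; first by rewrite addn0 => _ _ ->.
move=> /andP[rr' rs] /andP[r_notin s_uniq] s_last gap_r.
have rq : r != q by apply: contraNneq r_notin => ->; rewrite -s_last mem_last.
rewrite addnS -addSn; apply: (IH r') => //; apply: le_trans (gap_step rq rr') _.
rewrite exprSr invfM mulrA ler_pM2r ?invr_gt0 ?xmin_gt0 //.
rewrite -addn1 natrD mulrDr mulr1 mulrDl addrC lerD // ler_peMr //.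
by rewrite invf_ge1 ?exprn_gt0 ?exprn_ile1 ?xmin_gt0 ?xmin_le1 // ltW ?xmin_gt0.
Qed.

Lemma max_principle p : z p <= a * #|Q|%:R / xmin A ^+ #|Q|.
Proof.
set top := [arg max_(i > q) z i]%O.
have [s s_path s_last] := connectP (X_connected top q).
case: (shortenP s_path) s_last => s' s'_path s'_uniq _ s'_last.
have := gap_path (i := 0) s'_path s'_uniq (esym s'_last).
rewrite subrr mulr0 mul0r lexx add0n z_q subr0 => /(_ isT) zmax_le.
have s'_small : (size s' <= #|Q|)%N.
  by have := max_card (mem (top :: s')); rewrite (card_uniqP s'_uniq); apply: ltnW.
apply: le_trans (le_zmax p) (le_trans zmax_le _).
have y1 : 1 <= (xmin A)^-1 by rewrite invf_ge1 ?xmin_gt0 ?xmin_le1.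
rewrite -!mulrA ler_wpM2l // -!exprVn.
by apply: ler_pM; rewrite ?ler_nat ?exprn_ge0 ?ler_weXn2l //; lra.
Qed.

End MaximumPrinciple.

Lemma harmonic_pinned_eq0 (z : Q -> R) q : strongly_connected A -> z q = 0 ->
  (forall p, p != q -> z p = \sum_r X p r * z r) -> forall p, z p = 0.
Proof.
move=> X_conn z_q z_harm p.
have z_le0 : z p <= 0.
  have := max_principle X_conn (lexx 0) z_q _ p; rewrite !mul0r; apply=> r rq.
  by rewrite add0r z_harm.
have z_ge0 : - z p <= 0.
  have Nz_q : - z q = 0 by rewrite z_q oppr0.
  have := max_principle X_conn (z := fun r => - z r) (lexx 0) Nz_q _ p.
  rewrite !mul0r; apply=> r rq.
  by rewrite add0r z_harm // -sumrN; under eq_bigr do rewrite -mulrN.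
lra.
Qed.

Lemma poisson_pinned (w : Q -> R) q : strongly_connected A ->
  exists2 u : Q -> R, u q = 0 & forall p, p != q -> u p = w p + \sum_r X p r * u r.
Proof.
move=> X_conn.
pose Y p r := if p == q then 0 else X p r.
(* [L] is the transpose of [1 - Y] in rank coordinates, so that the row
   vector [u *m L] is [(1 - Y) u] and [row_free_unit] applies. *)
pose L : 'M[R]_#|Q| := \matrix_(i, j) ((i == j)%:R - Y (enum_val j) (enum_val i)).
have mulL (u : 'rV[R]_#|Q|) p : (u *m L) 0 (enum_rank p) =
    u 0 (enum_rank p) - \sum_r Y p r * u 0 (enum_rank r).
  rewrite mxE (big_enum_val (A := Q)) /=.
  under [in RHS]eq_bigr do rewrite enum_valK.
  under eq_bigr do rewrite mxE mulrBr.
  rewrite sumrB (bigD1 (enum_rank p)) //= eqxx mulr1 big1 ?addr0 => [|i /negbTE ->]; last first.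
    by rewrite mulr0.
  by rewrite enum_rankK; congr (_ - _); apply: eq_bigr => i _; rewrite mulrC.
have mulL_q (u : 'rV[R]_#|Q|) : (u *m L) 0 (enum_rank q) = u 0 (enum_rank q).
  by rewrite mulL big1 ?subr0 // => r _; rewrite /Y eqxx mul0r.
have mulL_neq (u : 'rV[R]_#|Q|) p : p != q ->
    (u *m L) 0 (enum_rank p) = u 0 (enum_rank p) - \sum_r X p r * u 0 (enum_rank r).
  by move=> pq; rewrite mulL /Y (negbTE pq).
have L_inj (u : 'rV[R]_#|Q|) : u *m L = 0 -> u = 0.
  move=> uL0; have u0 p : u 0 (enum_rank p) = 0.
    apply: (harmonic_pinned_eq0 (z := fun p => u 0 (enum_rank p)) (q := q) X_conn).
      by rewrite -mulL_q uL0 mxE.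
    by move=> r rq /=; apply/eqP; rewrite -subr_eq0 -mulL_neq // uL0 mxE.
  by apply/rowP => j; rewrite mxE -(enum_valK j) u0.
have L_unit : L \in unitmx.
  rewrite -row_free_unit -kermx_eq0; apply/eqP/row_matrixP => i.
  by rewrite row0; apply: L_inj; rewrite -row_mul mulmx_ker row0.
pose b : 'rV[R]_#|Q| := \row_j (if enum_val j == q then 0 else w (enum_val j)).
pose u := b *m invmx L.
have uL : u *m L = b by rewrite mulmxKV.
exists (fun p => u 0 (enum_rank p)); first by rewrite -mulL_q uL mxE enum_rankK eqxx.
move=> p pq; have := mulL_neq u p pq; rewrite uL mxE enum_rankK (negbTE pq) => ->.
by rewrite subrK.
Qed.

Lemma invariant_distribution_pos alpha :
  invariant_distribution A alpha -> exists p, 0 < alpha p.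
Proof.
move=> [alpha_ge0 [alpha_sum1 _]].
case: (pickP [pred p | 0 < alpha p]) => [p pos_p | no_pos]; first by exists p.
move: alpha_sum1; rewrite big1 => [/eqP|p _]; first by rewrite eq_sym oner_eq0.
by apply/eqP; rewrite eq_le alpha_ge0 andbT leNgt; have := no_pos p; rewrite /= => ->.
Qed.

Lemma invariant_mean alpha (f : Q -> R) : invariant_distribution A alpha ->
  \sum_p alpha p * \sum_r X p r * f r = \sum_r alpha r * f r.
Proof.
move=> [_ [_ alpha_inv]]; under eq_bigr do rewrite big_distrr.
rewrite exchange_big; apply: eq_bigr => r _ /=; rewrite -alpha_inv big_distrl.
by apply: eq_bigr => p _; rewrite mulrA.
Qed.

Lemma poisson_trend alpha : strongly_connected A -> invariant_distribution A alpha ->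
  exists u : Q -> R, forall p, u p = drift A p - trend A alpha + \sum_r X p r * u r.
Proof.
move=> X_conn alpha_inv; have [q alpha_q] := invariant_distribution_pos alpha_inv.
have [u u_q u_eq] := poisson_pinned (fun p => drift A p - trend A alpha) q X_conn.
exists u => p; have [->|]:= eqVneq p q; last exact: u_eq.
pose e p := u p - \sum_r X p r * u r - (drift A p - trend A alpha).
have e_out r : r != q -> e r = 0 by move=> rq; rewrite /e u_eq //; ring.
have e_mean : \sum_r alpha r * e r = 0.
  have [_ [alpha_sum1 _]] := alpha_inv.
  rewrite /e; under eq_bigr do rewrite !mulrBr.
  rewrite !sumrB invariant_mean // subrr sub0r -big_distrl /= alpha_sum1 mul1r.
  by rewrite subrr oppr0.
move: e_mean; rewrite (bigD1 q) //= big1 ?addr0 => [|r rq]; last by rewrite e_out ?mulr0.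
move/eqP; rewrite mulf_eq0 (gt_eqF alpha_q) /= /e => /eqP; lra.
Qed.

Lemma poisson_oscillation_le (u w : Q -> R) a : strongly_connected A -> 0 <= a ->
  (forall p, w p <= a) -> (forall p, u p = w p + \sum_r X p r * u r) ->
  forall p q, u p - u q <= a * #|Q|%:R / xmin A ^+ #|Q|.
Proof.
move=> X_conn a_ge0 w_le u_eq p q.
apply: (max_principle X_conn (z := fun r => u r - u q)) => //= [|r _]; first exact: subrr.
have -> : \sum_s X r s * (u s - u q) = \sum_s X r s * u s - u q.
  by under eq_bigr do rewrite mulrBr; rewrite sumrB -big_distrl /= Xmat_sum1 mul1r.
by rewrite {1}(u_eq r); have := w_le r; lra.
Qed.

Lemma stepE p k q :
  [/\ step A (p, k.+1) (q, k) = Pp A p (-1)%Z q,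
      step A (p, k.+1) (q, k.+1) = Pp A p 0%Z q,
      step A (p, k.+1) (q, k.+2) = Pp A p 1%Z q,
      step A (p, 0%N) (q, 0%N) = Pz A p 0%Z q &
      step A (p, 0%N) (q, 1%N) = Pz A p 1%Z q].
Proof. by rewrite /step /=; split => //; congr Pp; lia. Qed.

Lemma step_sum1 (x : config Q) :
  \sum_(c <- next_counters x.2) \sum_q step A x (q, c) = 1.
Proof.
case: x => p [|k] /=.
  rewrite -(Pz_sum A p) !big_cons !big_nil; congr (_ + (_ + _));
  by apply: eq_bigr => q _; case: (stepE p 0 q).
rewrite -(Pp_sum A p) !big_cons !big_nil; congr (_ + (_ + (_ + _)));
by apply: eq_bigr => q _; case: (stepE p k q).
Qed.

Lemma step_mean_pos (v : Q -> R) p k (T : R) :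
  \sum_(c <- next_counters k.+1) \sum_q step A (p, k.+1) (q, c) * (c%:R + v q - T)
  = k.+1%:R + drift A p + \sum_q Xmat A p q * v q - T.
Proof.
have sum_aff (c : nat) (d : int) : (forall q, step A (p, k.+1) (q, c) = Pp A p d q) ->
    \sum_q step A (p, k.+1) (q, c) * (c%:R + v q - T) =
    (c%:R - T) * \sum_q Pp A p d q + \sum_q Pp A p d q * v q.
  move=> stepP; rewrite big_distrr -big_split; apply: eq_bigr => q _ /=.
  by rewrite stepP; ring.
rewrite /next_counters !big_cons big_nil addr0.
rewrite (sum_aff k (-1)%Z); last by move=> q; case: (stepE p k q).
rewrite (sum_aff k.+1 0%Z); last by move=> q; case: (stepE p k q).
rewrite (sum_aff k.+2 1%Z); last by move=> q; case: (stepE p k q).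
have X_v : \sum_q Xmat A p q * v q = \sum_q Pp A p (-1)%Z q * v q
    + \sum_q Pp A p 0%Z q * v q + \sum_q Pp A p 1%Z q * v q.
  by rewrite -!big_split; apply: eq_bigr => q _; rewrite XmatE /=; ring.
have -> : \sum_q Pp A p 0%Z q = 1 - \sum_q Pp A p (-1)%Z q - \sum_q Pp A p 1%Z q.
  by have := Pp_sum3 p; lra.
by rewrite X_v driftE -[k.+2]addn2 -[k.+1]addn1 !natrD; ring.
Qed.

End FiniteChain.

Section StoppedProcess.
Variables (Q : finType) (R : realType) (x0 : config Q) (v : Q -> R) (t : R).

Definition positive_upto (s : seq (config Q)) n :=
  all (fun j => 0 < (nth (head x0 s) s j).2)%N (iota 0 n).

Definition run_value (s : seq (config Q)) j :=
  let x := nth (head x0 s) s j in x.2%:R + v x.1 - j%:R * t.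

Lemma mproc0 s : mproc x0 v t s 0 = run_value s 0.
Proof. by []. Qed.

Lemma mprocS s i : mproc x0 v t s i.+1 =
  if positive_upto s i.+1 then run_value s i.+1 else mproc x0 v t s i.
Proof. by []. Qed.

Lemma positive_uptoW s n : positive_upto s n.+1 -> positive_upto s n.
Proof. by rewrite /positive_upto -[n.+1]addn1 iotaD all_cat => /andP[]. Qed.

Lemma mproc_positive s n : positive_upto s n -> mproc x0 v t s n = run_value s n.
Proof. by case: n => [|n] // pos_s; rewrite mprocS pos_s. Qed.

Lemma nth_rcons_prefix rest y j : (j <= size rest)%N ->
  nth x0 (rcons (x0 :: rest) y) j = nth x0 (x0 :: rest) j.
Proof. by move=> j_le; rewrite nth_rcons ltnS j_le. Qed.

Lemma run_value_rcons rest y j : (j <= size rest)%N ->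
  run_value (rcons (x0 :: rest) y) j = run_value (x0 :: rest) j.
Proof. by move=> j_le; rewrite /run_value /= -rcons_cons nth_rcons_prefix. Qed.

Lemma positive_upto_rcons rest y n : (n <= (size rest).+1)%N ->
  positive_upto (rcons (x0 :: rest) y) n = positive_upto (x0 :: rest) n.
Proof.
move=> n_le; apply: eq_in_all => j; rewrite mem_iota add0n => /andP[_ j_lt] /=.
by rewrite -rcons_cons nth_rcons_prefix //; lia.
Qed.

Lemma mproc_rcons rest y i : (i <= size rest)%N ->
  mproc x0 v t (rcons (x0 :: rest) y) i = mproc x0 v t (x0 :: rest) i.
Proof.
elim: i => [|i IH] i_le; first by rewrite !mproc0 run_value_rcons.
by rewrite !mprocS positive_upto_rcons ?run_value_rcons ?IH //; lia.
Qed.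

Lemma mproc_next rest y :
  mproc x0 v t (rcons (x0 :: rest) y) (size rest).+1 =
  if positive_upto (x0 :: rest) (size rest).+1
  then y.2%:R + v y.1 - (size rest).+1%:R * t
  else mproc x0 v t (x0 :: rest) (size rest).
Proof.
rewrite mprocS positive_upto_rcons // mproc_rcons //.
by rewrite /run_value /= nth_rcons ltnn eqxx.
Qed.

End StoppedProcess.

Lemma mproc_martingale (Q : finType) (R : realType) (A : pOC Q R) (v : Q -> R) t :
  (forall p, v p = drift A p - t + \sum_r Xmat A p r * v r) ->
  forall x0, martingale_from A (fun i s => mproc x0 v t s i) x0.
Proof.
move=> v_poisson x0 rest _ s x; rewrite {}/s {}/x.
under eq_bigr do under eq_bigr do rewrite mproc_next.
case alive: (positive_upto x0 (x0 :: rest) (size rest).+1); last first.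
  under eq_bigr do rewrite -big_distrl.
  by rewrite -big_distrl /= step_sum1 mul1r.
have last_nth : nth x0 (x0 :: rest) (size rest) = last x0 rest by exact: nth_last.
have := allP alive (size rest); rewrite mem_iota ltnSn /= last_nth => /(_ isT).
rewrite mproc_positive ?(positive_uptoW alive) // /run_value /= last_nth.
case: (last x0 rest) => p [|k] //= _.
by rewrite step_mean_pos (v_poisson p) -[k.+1]addn1 -[(size rest).+1]addn1 !natrD; ring.
Qed.

Theorem mainTheorem11 (Q : finType) (R : realType) (A : pOC Q R)
    (alpha : Q -> R) :
  strongly_connected A -> invariant_distribution A alpha ->
  let t := trend A alpha in
  exists v : Q -> R,
    (forall x0 : config Q, martingale_from A (fun i s => mproc x0 v t s i) x0) /\
    (forall p q : Q, v p - v q <= 2 * #|Q|%:R / xmin A ^+ #|Q|).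
Proof.
move=> X_conn alpha_inv t.
have [v v_poisson] := poisson_trend X_conn alpha_inv.
exists v; split; first exact: mproc_martingale.
apply: (poisson_oscillation_le X_conn _ _ v_poisson) => // p.
have := normr_drift_le1 A p; have := normr_trend_le1 alpha_inv.
by rewrite !ler_norml; lra.
Qed.
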